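(* Let $\pi$ be a $\mathtt{TPDL}$ program and $\Gamma,\Delta,\Pi,\Sigma$ finite sets of $\mathtt{TPDL}$ formulas. Then $\Gamma\Rightarrow\Delta,[\pi]^{\leftarrow}\chi(\Pi\Rightarrow\Sigma)$ is provable in $\mathtt{GTPDL}$ if and only if $\Pi\Rightarrow\Sigma,[\pi]\chi(\Gamma\Rightarrow\Delta)$ is provable in $\mathtt{GTPDL}$.
   Context: $\mathtt{TPDL}$ formulas/programs over sets $\mathsf{Prop}$, $\mathsf{AtProg}$: $\varphi ::= \bot \mid p \mid (\varphi\to\varphi) \mid [\pi]\varphi \mid [\pi]^{\leftarrow}\varphi$, $\pi ::= \alpha \mid \pi;\pi \mid \pi\cup\pi \mid \pi^{*} \mid \varphi?$. Abbreviations: $\neg\varphi:=\varphi\to\bot$, $\varphi\lor\psi:=(\varphi\to\bot)\to\psi$, $\varphi\land\psi:=(\varphi\to(\psi\to\bot))\to\bot$. For a finite set $\Lambda=\{\varphi_0,\dots,\varphi_n\}$ (in a fixed enumeration), $\bigwedge\Lambda=(\cdots(\varphi_0\land\varphi_1)\land\cdots\land\varphi_n)$, $\bigvee\Lambda=(\cdots(\varphi_0\lor\varphi_1)\lor\cdots\lor\varphi_n)$, $\bigwedge\emptyset=\bot\to\bot$, $\bigvee\emptyset=\bot$. For a sequent, $\chi(\Gamma\Rightarrow\Delta):=\bigwedge\Gamma\to\bigvee\Delta$. $[\pi]\Gamma=\{[\pi]\varphi:\varphi\in\Gamma\}$, similarly $[\pi]^{\leftarrow}\Gamma$. A sequent is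 a pair of finite sets of formulas. $\mathtt{GTPDL}$ rules (premises / conclusion): (Ax) / $\Gamma\Rightarrow\Delta$, $\Gamma\cap\Delta\neq\emptyset$; ($\bot$) / $\Gamma,\bot\Rightarrow\Delta$; ($\to$L) $\Gamma\Rightarrow\varphi,\Delta$ and $\Gamma,\psi\Rightarrow\Delta$ / $\Gamma,\varphi\to\psi\Rightarrow\Delta$; ($\to$R) $\Gamma,\varphi\Rightarrow\psi,\Delta$ / $\Gamma\Rightarrow\varphi\to\psi,\Delta$; (Wk) $\Gamma\Rightarrow\Delta$ / $\Gamma'\Rightarrow\Delta'$, $\Gamma\subseteq\Gamma'$, $\Delta\subseteq\Delta'$; (Cut) $\Gamma\Rightarrow\varphi,\Delta$ and $\Gamma,\varphi\Rightarrow\Delta$ / $\Gamma\Rightarrow\Delta$; ($[\,]$) $\Gamma\Rightarrow\varphi,[\pi]^{\leftarrow}\Delta$ / $[\pi]\Gamma\Rightarrow[\pi]\varphi,\Delta$; ($[\,]^{\leftarrow}$) $\Gamma\Rightarrow\varphi,[\pi]\Delta$ / $[\pi]^{\leftarrow}\Gamma\Rightarrow[\pi]^{\leftarrow}\varphi,\Delta$; ($[;]$L) $\Gamma,[\pi_0][\pi_1]\varphi\Rightarrow\Delta$ / $\Gamma,[\pi_0;\pi_1]\varphi\Rightarrow\Delta$; ($[;]$R) $\Gamma\Rightarrow[\pi_0][\pi_1]\varphi,\Delta$ / $\Gamma\Rightarrow[\pi_0;\pi_1]\varphi,\Delta$; ($[\cup]$L) $\Gamma,[\pi_0]\varphi,[\pi_1]\varphi\Rightarrow\Delta$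 / $\Gamma,[\pi_0\cup\pi_1]\varphi\Rightarrow\Delta$; ($[\cup]$R) $\Gamma\Rightarrow\Delta,[\pi_0]\varphi$ and $\Gamma\Rightarrow\Delta,[\pi_1]\varphi$ / $\Gamma\Rightarrow[\pi_0\cup\pi_1]\varphi,\Delta$; ($[*]$L) $\Gamma,\varphi,[\pi][\pi^*]\varphi\Rightarrow\Delta$ / $\Gamma,[\pi^*]\varphi\Rightarrow\Delta$; ($[*]$R) $\Gamma,\varphi\Rightarrow[\pi]\varphi$ / $[\pi^*]\Gamma,\varphi\Rightarrow[\pi^*]\varphi$; ($[?]$L) $\Gamma\Rightarrow\varphi,\Delta$ and $\Gamma,\psi\Rightarrow\Delta$ / $\Gamma,[\varphi?]\psi\Rightarrow\Delta$; ($[?]$R) $\Gamma,\varphi\Rightarrow\psi,\Delta$ / $\Gamma\Rightarrow[\varphi?]\psi,\Delta$. A $\mathtt{GTPDL}$ proof is a finite tree of sequents, each node the conclusion of a rule instance whose premises are its children (leaves are Ax/$\bot$ instances). *)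

From Stdlib Require Import List.
Import ListNotations.

Set Implicit Arguments.

Section Syntax.
Variables (Prp AtProg : Type).

Inductive form : Type :=
  | FBot : form
  | FVar : Prp -> form
  | FImp : form -> form -> form
  | FBox : prog -> form -> form
  | FBoxC : prog -> form -> form       (* [pi]^<- phi (converse box) *)
with prog : Type :=
  | PAtom : AtProg -> prog
  | PSeq : prog -> prog -> prog
  | PCup : prog -> prog -> prog
  | PStar : prog -> prog
  | PTest : form -> prog.

Definition FNeg (a : form) : form := FImp a FBot.
Definition FOr (a b : form) : form := FImp (FImp a FBot) b.
Definition FAnd (a b : form) : form := FImp (FImp a (FImp b FBot)) FBot.

(* A finite set is represented by a list enumerating it (the list order is
   the fixed enumeration).  bigAnd [p0;...;pn] = (..(p0 /\ p1) /\ ..) /\ pn *)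
Definition bigAnd (l : list form) : form :=
  match l with
  | [] => FImp FBot FBot
  | x :: xs => fold_left FAnd xs x
  end.

Definition bigOr (l : list form) : form :=
  match l with
  | [] => FBot
  | x :: xs => fold_left FOr xs x
  end.

Definition chi (G D : list form) : form := FImp (bigAnd G) (bigOr D).

Definition subl (l l' : list form) : Prop := forall x, In x l -> In x l'.

(* GTPDL derivability.  Sequents are pairs of lists read as finite sets:
   membership is In, and the (Wk) rule (with set inclusion) makes provability
   invariant under reordering / duplication. *)
Inductive provable : list form -> list form -> Prop :=
  | R_Ax : forall G D a, In a G -> In a D -> provable G D
  | R_Bot : forall G D, provable (FBot :: G) D
  | R_ImpL : forall G D a b,
      provable G (a :: D) -> provable (b :: G) D ->
      provable (FImp a b :: G) D
  | R_ImpR : forall G D a b,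
      provable (a :: G) (b :: D) -> provable G (FImp a b :: D)
  | R_Wk : forall G D G' D',
      provable G D -> subl G G' -> subl D D' -> provable G' D'
  | R_Cut : forall G D a,
      provable G (a :: D) -> provable (a :: G) D -> provable G D
  | R_Box : forall G D a p,
      provable G (a :: map (FBoxC p) D) ->
      provable (map (FBox p) G) (FBox p a :: D)
  | R_BoxC : forall G D a p,
      provable G (a :: map (FBox p) D) ->
      provable (map (FBoxC p) G) (FBoxC p a :: D)
  | R_SeqL : forall G D p0 p1 a,
      provable (FBox p0 (FBox p1 a) :: G) D ->
      provable (FBox (PSeq p0 p1) a :: G) D
  | R_SeqR : forall G D p0 p1 a,
      provable G (FBox p0 (FBox p1 a) :: D) ->
      provable G (FBox (PSeq p0 p1) a :: D)
  | R_CupL : forall G D p0 p1 a,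
      provable (FBox p0 a :: FBox p1 a :: G) D ->
      provable (FBox (PCup p0 p1) a :: G) D
  | R_CupR : forall G D p0 p1 a,
      provable G (FBox p0 a :: D) -> provable G (FBox p1 a :: D) ->
      provable G (FBox (PCup p0 p1) a :: D)
  | R_StarL : forall G D p a,
      provable (a :: FBox p (FBox (PStar p) a) :: G) D ->
      provable (FBox (PStar p) a :: G) D
  | R_StarR : forall G p a,
      provable (a :: G) [FBox p a] ->
      provable (a :: map (FBox (PStar p)) G) [FBox (PStar p) a]
  | R_TestL : forall G D a b,
      provable G (a :: D) -> provable (b :: G) D ->
      provable (FBox (PTest a) b :: G) D
  | R_TestR : forall G D a b,
      provable (a :: G) (b :: D) -> provable G (FBox (PTest a) b :: D).

End Syntax.

Arguments FBot {Prp AtProg}.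

(* A sequent [Γ ⇒ X, Δ] is derivable iff [⇒ χ(Γ ⇒ Δ), X] is: cut against the
   conjuncts of [⋀Γ] and the disjuncts of [⋁Δ].  With empty antecedent, the rules
   ([]) and ([]^←) become the residuation [⊢ a, [π]^← b] iff [⊢ b, [π] a], and the
   theorem is this residuation for [a = χ(Γ ⇒ Δ)] and [b = χ(Π ⇒ Σ)]. *)
From Stdlib Require Import List Setoid.
Import ListNotations.

Ltac weaken H :=
  apply (R_Wk H); unfold subl; simpl; intros;
  repeat rewrite in_app_iff in *; simpl in *; intuition.

Ltac ax x := apply R_Ax with (a := x); simpl; auto.

Section Derived.
Variables (P A : Type).

Lemma provable_trans (a b c : form P A) :
  provable [a] [b] -> provable [b] [c] -> provable [a] [c].
Proof.
  intros Hab Hbc. apply R_Cut with (a := b).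
  - weaken Hab.
  - weaken Hbc.
Qed.

Lemma provable_swap (a b : form P A) :
  provable [] [a; b] -> provable [] [b; a].
Proof. intros H. weaken H. Qed.

Lemma FAnd_elim_l (a b : form P A) : provable [FAnd a b] [a].
Proof.
  apply R_ImpL.
  - apply R_ImpR. ax a.
  - apply R_Bot.
Qed.

Lemma FAnd_elim_r (a b : form P A) : provable [FAnd a b] [b].
Proof.
  apply R_ImpL.
  - do 2 apply R_ImpR. ax b.
  - apply R_Bot.
Qed.

Lemma FAnd_intro (G : list (form P A)) a b :
  provable G [a] -> provable G [b] -> provable G [FAnd a b].
Proof.
  intros Ha Hb. apply R_ImpR, R_ImpL.
  - weaken Ha.
  - apply R_ImpL.
    + weaken Hb.
    + apply R_Bot.
Qed.

Lemma FOr_intro_l (a b : form P A) : provable [a] [FOr a b].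
Proof.
  apply R_ImpR, R_ImpL.
  - ax a.
  - apply R_Bot.
Qed.

Lemma FOr_intro_r (a b : form P A) : provable [b] [FOr a b].
Proof. apply R_ImpR. ax b. Qed.

Lemma FOr_elim (D : list (form P A)) a b :
  provable [a] D -> provable [b] D -> provable [FOr a b] D.
Proof.
  intros Ha Hb. apply R_ImpL.
  - apply R_ImpR. weaken Ha.
  - exact Hb.
Qed.

Lemma fold_FAnd_elim (xs : list (form P A)) :
  forall acc g, In g (acc :: xs) -> provable [fold_left (@FAnd P A) xs acc] [g].
Proof.
  induction xs as [|y xs IH]; intros acc g [->|Hg]; simpl.
  - ax g.
  - destruct Hg.
  - apply provable_trans with (FAnd g y); auto using FAnd_elim_l, in_eq.
  - destruct Hg as [->|Hg]; auto using in_cons.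
    apply provable_trans with (FAnd acc g); auto using FAnd_elim_r, in_eq.
Qed.

Lemma fold_FAnd_intro (xs : list (form P A)) :
  forall acc G, provable G [acc] -> (forall y, In y xs -> provable G [y]) ->
  provable G [fold_left (@FAnd P A) xs acc].
Proof.
  induction xs as [|y xs IH]; intros acc G Hacc Hxs; simpl; auto.
  apply IH; auto using in_cons.
  apply FAnd_intro; auto using in_eq.
Qed.

Lemma fold_FOr_intro (xs : list (form P A)) :
  forall acc d, In d (acc :: xs) -> provable [d] [fold_left (@FOr P A) xs acc].
Proof.
  induction xs as [|y xs IH]; intros acc d [->|Hd]; simpl.
  - ax d.
  - destruct Hd.
  - apply provable_trans with (FOr d y); auto using FOr_intro_l, in_eq.
  - destruct Hd as [->|Hd]; auto using in_cons.
    apply provable_trans with (FOr acc d); auto using FOr_intro_r, in_eq.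
Qed.

Lemma fold_FOr_elim (xs : list (form P A)) :
  forall acc D, provable [acc] D -> (forall y, In y xs -> provable [y] D) ->
  provable [fold_left (@FOr P A) xs acc] D.
Proof.
  induction xs as [|y xs IH]; intros acc D Hacc Hxs; simpl; auto.
  apply IH; auto using in_cons.
  apply FOr_elim; auto using in_eq.
Qed.

Lemma bigAnd_elim (G : list (form P A)) g :
  In g G -> provable [bigAnd G] [g].
Proof. destruct G as [|x xs]; [intros []|apply fold_FAnd_elim]. Qed.

Lemma bigAnd_intro (G : list (form P A)) : provable G [bigAnd G].
Proof.
  destruct G as [|x xs]; simpl.
  - apply R_ImpR, R_Bot.
  - apply fold_FAnd_intro; [ax x|intros y Hy; ax y].
Qed.

Lemma bigOr_intro (D : list (form P A)) d :
  In d D -> provable [d] [bigOr D].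
Proof. destruct D as [|x xs]; [intros []|apply fold_FOr_intro]. Qed.

Lemma bigOr_elim (D : list (form P A)) : provable [bigOr D] D.
Proof.
  destruct D as [|x xs]; simpl.
  - apply R_Bot.
  - apply fold_FOr_elim; [ax x|intros y Hy; ax y].
Qed.

Lemma cut_list_l (G : list (form P A)) :
  forall G' D, provable (G ++ G') D -> (forall g, In g G -> provable G' (g :: D)) ->
  provable G' D.
Proof.
  induction G as [|g G IH]; intros G' D H HG; simpl in *; auto.
  apply IH; auto.
  apply R_Cut with (a := g); [|exact H].
  specialize (HG g (or_introl eq_refl)). weaken HG.
Qed.

Lemma cut_list_r (D : list (form P A)) :
  forall G D', provable G (D ++ D') -> (forall d, In d D -> provable (d :: G) D') ->
  provable G D'.
Proof.
  induction D as [|d D IH]; intros G D' H HD; simpl in *; auto.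
  apply IH; auto.
  apply R_Cut with (a := d); [exact H|].
  specialize (HD d (or_introl eq_refl)). weaken HD.
Qed.

Lemma provable_chi (G D : list (form P A)) X :
  provable G (X :: D) <-> provable [] [chi G D; X].
Proof.
  split; intros H.
  - apply R_ImpR.
    assert (HbigAnd : provable [bigAnd G] (X :: D)).
    { apply (cut_list_l G); [weaken H|].
      intros g Hg. pose proof (bigAnd_elim G g Hg) as Hg'. weaken Hg'. }
    apply (cut_list_r D); [weaken HbigAnd|].
    intros d Hd. pose proof (bigOr_intro D d Hd) as Hd'. weaken Hd'.
  - apply R_Cut with (a := chi G D); [weaken H|].
    apply R_ImpL.
    + pose proof (bigAnd_intro G) as HG. weaken HG.
    + pose proof (bigOr_elim D) as HD. weaken HD.
Qed.

Lemma box_residuation (p : prog P A) (a b : form P A) :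
  provable [] [a; FBoxC p b] <-> provable [] [b; FBox p a].
Proof.
  split; intros H; apply provable_swap.
  - exact (R_Box (G := []) [b] p H).
  - exact (R_BoxC (G := []) [a] p H).
Qed.

End Derived.

Theorem mainTheorem14 (Prp AtProg : Type) (p : prog Prp AtProg)
    (G D Pi Sg : list (form Prp AtProg)) :
  provable G (FBoxC p (chi Pi Sg) :: D) <->
  provable Pi (FBox p (chi G D) :: Sg).
Proof.
  rewrite provable_chi, box_residuation, <- provable_chi.
  reflexivity.
Qed.
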